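(* Let $m\ge 2$ and $\bm P_m=\bm I_m-\frac1m\bm J_m\in\mathbb{R}^{m\times m}$. Then $\bm P_m$ admits a unique Cholesky factorization $\bm P_m=\bm L\bm L^T$ with $\bm L\in\mathbb{R}^{m\times m}$ lower triangular with nonnegative diagonal entries, and $\bm L$ is given explicitly by \[ L_{ij}=\begin{cases}\sqrt{\dfrac{m-i}{m-i+1}}, & i=j<m,\\[1ex] -\dfrac{1}{\sqrt{(m-j+1)(m-j)}}, & 1\le j<i\le m,\\[1ex] 0, & \text{otherwise}.\end{cases} \]
   Context: $\bm J_m$ denotes the $m\times m$ all-ones matrix and $\bm I_m$ the identity matrix. *)

From HB Require Import structures.
From mathcomp Require Import all_boot all_order all_algebra.
Set Implicit Arguments. Unset Strict Implicit. Unset Printing Implicit Defensive.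
Import Order.TTheory GRing.Theory Num.Theory.
Local Open Scope ring_scope.

Definition Pm (R : rcfType) (m : nat) : 'M[R]_m :=
  1%:M - (m%:R)^-1 *: const_mx 1.

(* Explicit Cholesky factor, indices 0-based: paper's (i,j) = (i+1, j+1). *)
Definition cholL (R : rcfType) (m : nat) : 'M[R]_m :=
  \matrix_(i < m, j < m)
    if (i == j :> nat) && (i.+1 < m)%N then
      Num.sqrt ((m - i.+1)%:R / (m - i)%:R)
    else if (j < i)%N then
      - (Num.sqrt ((m - j)%:R * (m - j.+1)%:R))^-1
    else 0.

From mathcomp Require Import all_boot all_order all_algebra.
From mathcomp Require Import ring zify.
Import Order.TTheory GRing.Theory Num.Theory.
Local Open Scope ring_scope.

(* Uniqueness: the Gram identity A A^T = B B^T, read column by column, determines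
   column j of a lower triangular factor from the previous columns, up to the
   division by the diagonal entry B j j; only the last diagonal entry of the
   explicit factor vanishes, and the last column has no entry below it.
   Existence: column k of L has the constant subdiagonal entry
   -1/sqrt((m-k)(m-k-1)), whose square 1/(m-k-1) - 1/(m-k) telescopes, so the
   sum over the first j columns of L_ik L_jk is 1/(m-j) - 1/m; the diagonal
   term adds 1 - 1/(m-j) for i = j and -1/(m-j) for i > j. *)

Section TrigGram.
Variables (R : numDomainType) (m : nat).
Implicit Types A B : 'M[R]_m.

Lemma mul_trig_trmxE A (i j : 'I_m) : is_trig_mx A ->
  (A *m A^T) i j = \sum_(k < m | (k < j)%N) A i k * A j k + A i j * A j j.
Proof.
move/is_trig_mxP=> trigA; rewrite mxE (bigD1 j) //= !mxE addrC; congr (_ + _).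
rewrite (bigID (fun k : 'I_m => (k < j)%N)) /= [X in _ + X]big1 ?addr0.
  apply: eq_big => [k|k _]; last by rewrite mxE.
  by case: ltnP => hk; rewrite ?andbF // andbT neq_ltn hk.
move=> k /andP[kj]; rewrite -leqNgt => jk.
by rewrite mxE (trigA j k) ?mulr0 // ltn_neqAle eq_sym kj jk.
Qed.

Lemma mul_mx_trmx_sym A (i j : 'I_m) : (A *m A^T) i j = (A *m A^T) j i.
Proof. by rewrite !mxE; apply: eq_bigr => k _; rewrite !mxE mulrC. Qed.

Section Uniqueness.
Variables A B : 'M[R]_m.
Hypotheses (trigA : is_trig_mx A) (trigB : is_trig_mx B).
Hypotheses (diagA_ge0 : forall i, 0 <= A i i) (diagB_ge0 : forall i, 0 <= B i i).
Hypothesis diagB_neq0 : forall j : 'I_m, (j.+1 < m)%N -> B j j != 0.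
Hypothesis gramAB : A *m A^T = B *m B^T.

Lemma trig_gram_col_eq (j : 'I_m) :
  (forall k : 'I_m, (k < j)%N -> forall i, A i k = B i k) ->
  forall i, A i j = B i j.
Proof.
move=> eq_prev.
have col_mul_diag i : A i j * A j j = B i j * B j j.
  have := congr1 (fun M : 'M[R]_m => M i j) gramAB => /=.
  rewrite !mul_trig_trmxE //; under eq_bigr => k kj do rewrite !eq_prev //.
  exact: addrI.
have eq_diag : A j j = B j j.
  by apply/eqP; rewrite -(@eqrXn2 _ 2) // !expr2 col_mul_diag.
move=> i; case: (ltngtP i j) => [ij|ji|/val_inj -> //].
- by rewrite (is_trig_mxP trigA) // (is_trig_mxP trigB).
- have nzB : B j j != 0 by apply: diagB_neq0; apply: leq_ltn_trans ji _.
  by apply: (mulIf nzB); rewrite -{1}eq_diag col_mul_diag.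
Qed.

Lemma trig_gram_uniq : A = B.
Proof.
suff eq_cols n (j : 'I_m) : (j < n)%N -> forall i, A i j = B i j.
  by apply/matrixP => i j; apply: (eq_cols j.+1).
elim: n j => [//|n IHn] j; rewrite ltnS leq_eqVlt => /orP[/eqP jn|]; last exact: IHn.
by apply: trig_gram_col_eq => k; rewrite jn; apply: IHn.
Qed.

End Uniqueness.
End TrigGram.

Lemma sqrtr_div_mulV (R : rcfType) (a b : R) : 0 < a -> 0 < b ->
  Num.sqrt (a / b) / Num.sqrt (b * a) = b^-1.
Proof.
move=> a_gt0 b_gt0; rewrite !sqrtrM ?sqrtrV ?ltW //.
have sqr_b : Num.sqrt b ^+ 2 = b by rewrite sqr_sqrtr ?ltW.
have sa_neq0 : Num.sqrt a != 0 by rewrite sqrtr_eq0 -ltNge.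
have sb_neq0 : Num.sqrt b != 0 by rewrite sqrtr_eq0 -ltNge.
by rewrite -[in RHS]sqr_b; field; rewrite sa_neq0 sb_neq0.
Qed.

Definition chol_subdiag (R : rcfType) (m k : nat) : R :=
  (Num.sqrt ((m - k)%:R * (m - k.+1)%:R))^-1.

Section CenteringCholesky.
Variables (R : rcfType) (m : nat).
Local Notation L := (cholL R m).
Local Notation c := (chol_subdiag R m).

Lemma PmE (i j : 'I_m) : Pm R m i j = (i == j)%:R - m%:R^-1.
Proof. by rewrite /Pm !mxE mulr1. Qed.

Lemma cholL_lt (i k : 'I_m) : (k < i)%N -> L i k = - c k.
Proof. by move=> ki; rewrite /cholL mxE (gtn_eqF ki) /= ki. Qed.

Lemma cholL_gt (i k : 'I_m) : (i < k)%N -> L i k = 0.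
Proof. by move=> ik; rewrite /cholL mxE (ltn_eqF ik) /= ltnNge ltnW. Qed.

Lemma cholL_diag (j : 'I_m) :
  L j j = if (j.+1 < m)%N then Num.sqrt ((m - j.+1)%:R / (m - j)%:R) else 0.
Proof. by rewrite /cholL mxE eqxx /= ltnn; case: ifP. Qed.

Lemma cholL_trig : is_trig_mx L.
Proof. by apply/is_trig_mxP => i j; apply: cholL_gt. Qed.

Lemma cholL_diag_ge0 (i : 'I_m) : 0 <= L i i.
Proof. by rewrite cholL_diag; case: ifP => // _; apply: sqrtr_ge0. Qed.

Lemma cholL_diag_neq0 (j : 'I_m) : (j.+1 < m)%N -> L j j != 0.
Proof. by move=> jm; rewrite cholL_diag jm sqrtr_eq0 -ltNge divr_gt0 // ltr0n; lia. Qed.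

Lemma sqr_chol_subdiag k : (k.+1 < m)%N ->
  c k ^+ 2 = (m - k.+1)%:R^-1 - (m - k)%:R^-1.
Proof.
move=> km; rewrite exprVn sqr_sqrtr ?mulr_ge0 //.
have -> : (m - k = (m - k.+1).+1)%N by lia.
have : (0 < m - k.+1)%N by lia.
set n := (m - k.+1)%N; rewrite -(ltr0n R) -addn1 natrD => n_gt0.
by field; rewrite !gt_eqF // addr_gt0.
Qed.

Lemma sum_sqr_chol_subdiag j : (j < m)%N ->
  \sum_(k < m | (k < j)%N) c k ^+ 2 = (m - j)%:R^-1 - m%:R^-1.
Proof.
move=> jm; rewrite -(big_ord_widen m (fun k => c k ^+ 2)); last exact: ltnW.
have := @telescope_sumr_eq _ 0 j (fun k => (m - k)%:R^-1) (fun k => c k ^+ 2) (leq0n j).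
rewrite big_mkord subn0; apply=> k /andP[_ kj].
by apply: sqr_chol_subdiag; apply: leq_ltn_trans kj jm.
Qed.

Lemma cholL_mul_diag (i j : 'I_m) : (j <= i)%N ->
  L i j * L j j = (i == j)%:R - (m - j)%:R^-1.
Proof.
rewrite leq_eqVlt => /orP[/eqP/val_inj <- | ji].
  rewrite eqxx mulr1n -expr2 cholL_diag; case: ifP => jm; last first.
    have -> : (m - j = 1)%N by move: jm (ltn_ord j); rewrite ltnNge => /negbFE; lia.
    by rewrite expr0n invr1 subrr.
  rewrite sqr_sqrtr ?divr_ge0 //.
  have -> : (m - j = (m - j.+1) + 1)%N by lia.
  by rewrite natrD; field; rewrite gt_eqF // ltr_wpDl.
have jm : (j.+1 < m)%N by apply: leq_ltn_trans ji _.
rewrite -val_eqE (gtn_eqF ji) sub0r cholL_lt // cholL_diag jm mulNr mulrC.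
by rewrite sqrtr_div_mulV // ltr0n; lia.
Qed.

Lemma cholL_gram : L *m L^T = Pm R m.
Proof.
apply/matrixP => i j.
wlog ji : i j / (j <= i)%N.
  move=> gram_le; case: (leqP j i) => [|/ltnW] ij; first exact: gram_le.
  by rewrite mul_mx_trmx_sym gram_le // !PmE eq_sym.
have sum_below : \sum_(k < m | (k < j)%N) L i k * L j k =
                 \sum_(k < m | (k < j)%N) c k ^+ 2.
  apply: eq_bigr => k kj.
  by rewrite !cholL_lt ?(leq_trans kj ji) // mulrNN expr2.
rewrite mul_trig_trmxE ?cholL_trig // sum_below sum_sqr_chol_subdiag //.
by rewrite cholL_mul_diag // PmE; ring.
Qed.

End CenteringCholesky.

Theorem lemma2 (R : rcfType) (m : nat) (hm : (2 <= m)%N) (L : 'M[R]_m) :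
  [/\ is_trig_mx L, (forall i : 'I_m, 0 <= L i i) & Pm R m = L *m L^T]
  <-> L = cholL R m.
Proof.
split=> [[trigL diagL_ge0 PmL] | ->]; last first.
  by split; [exact: cholL_trig | exact: cholL_diag_ge0 | rewrite cholL_gram].
apply: trig_gram_uniq => //.
- exact: cholL_trig.
- exact: cholL_diag_ge0.
- exact: cholL_diag_neq0.
- by rewrite -PmL cholL_gram.
Qed.
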